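(* Assume (R). For $n\ge k\ge0$, $$a_{n,k}:=\frac{d^k}{dx^k}A^\star_{n,2k}(x)\Big|_{x=1}=(-1)^nk!\sum_{\nu=0}^{k}\binom{2k-\nu}{k}\binom{n}{\nu}\alpha_{n-\nu}.$$ For $n\ge2$ and $0\le k\le n-2$, $$a_{n,k+2}=(4k+6)\,a_{n,k+1}+n(n-1)\,a_{n-2,k}.$$ For odd $n\ge1$, $A_n(x)=(2x-1)F_n(x(x-1))$ and $\hat f_{n,k}=(-1)^ka_{n,k}$ for $0\le k\le\lfloor n/2\rfloor$.
   Context: Let $(\alpha_n)_{n\ge0}$ be an arbitrary sequence of complex numbers with Appell polynomials $A_n(x)=\sum_{\nu=0}^{n}\binom{n}{\nu}\alpha_{n-\nu}x^\nu$; property (R) means $A_n(1-x)=(-1)^nA_n(x)$ for all $n\ge0$. For $n\ge0,k\in\mathbb Z$ let $A^\star_{n,k}(x)=x^kA_n(x^{-1})$. Let $d_n=\lfloor n/2\rfloor$, $\delta_n=1$ if $n$ odd, $0$ otherwise. Under (R), for each $n$ there is a unique polynomial $F_n(u)=\sum_{k\ge0}f_{n,k}u^k$ of degree at most $d_n$ with $A_n(x)=(2x-1)^{\delta_n}F_n(x(x-1))$; set $\hat f_{n,k}=k!\,f_{n,k}$. *)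

From HB Require Import structures.
From mathcomp Require Import all_boot all_order all_algebra.
From mathcomp Require Import reals complex.
Set Implicit Arguments. Unset Strict Implicit. Unset Printing Implicit Defensive.
Import Order.TTheory GRing.Theory Num.Theory.
Local Open Scope ring_scope.

Section Appell.
Variable R : realType.
Local Notation C := R[i].
Variable alpha : nat -> C.

Definition appell (n : nat) : {poly C} :=
  \sum_(nu < n.+1) (('C(n, nu))%:R * alpha (n - nu)) *: 'X^nu.

Definition propR : Prop :=
  forall (n : nat) (x : C), (appell n).[1 - x] = (-1) ^+ n * (appell n).[x].

End Appell.

(* Laurent polynomials in one variable, as finite formal sums
   sum_j c_j x^(e_j) with e_j : int, represented by the list of (c_j, e_j). *)
Section Laurent.
Variable F : fieldType.
Definition laurent := seq (F * int).

Definition leval (p : laurent) (x : F) : F := \sum_(m <- p) m.1 * x ^ m.2.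

Definition lderiv (p : laurent) : laurent :=
  [seq (m.1 *~ m.2, m.2 - 1) | m <- p].

Definition lderivn_at1 (k : nat) (p : laurent) : F := leval (iter k lderiv p) 1.
End Laurent.

Section Star.
Variable R : realType.
Local Notation C := R[i].
Variable alpha : nat -> C.

(* A*_{n,k}(x) = x^k A_n(x^{-1}) = sum_nu binom(n,nu) alpha_{n-nu} x^(k-nu),
   as a Laurent polynomial *)
Definition Astar (n : nat) (k : int) : laurent C :=
  [seq (('C(n, nu))%:R * alpha (n - nu), k - nu%:Z) | nu <- iota 0 n.+1].

Definition acoef (n k : nat) : C := lderivn_at1 k (Astar n (2 * k)%N%:Z).

Lemma Astar_eval (n : nat) (k : int) (x : C) : x != 0 ->
  leval (Astar n k) x = x ^ k * (appell alpha n).[x^-1].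
Proof.
move=> x0; rewrite /leval /Astar /appell big_map horner_sum mulr_sumr.
rewrite -(big_mkord xpredT (fun nu => x ^ k * ((('C(n, nu))%:R * alpha (n - nu)) *: 'X^nu).[x^-1])).
rewrite /index_iota subn0; apply: eq_bigr => nu _ /=.
rewrite hornerZ hornerXn mulrCA; congr (_ * _).
rewrite expfzDr //.
have -> : x ^ (- nu%:Z) = x^-1 ^+ nu by rewrite -exprz_inv.
by [].
Qed.
End Star.

From HB Require Import structures.
From mathcomp Require Import all_boot all_order all_algebra.
From mathcomp Require Import reals complex.
From mathcomp Require Import ring zify.
Import Order.TTheory GRing.Theory Num.Theory.
Set Implicit Arguments. Unset Strict Implicit. Unset Printing Implicit Defensive.
Local Open Scope ring_scope.

(* For a polynomial p = sum_j p_j X^j and s : int, the k-th derivative at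
   x = 1 of the Laurent polynomial x^s p(1/x) is the linear functional
       Dstar k s p = sum_j p_j (s - j)^(k),
   where (y)^(k) = y (y - 1) ... (y - k + 1) is the falling factorial of an
   integer; a_{n,k} is Dstar k (2k) A_n.  Its basic rules are linearity,
   Dstar k s (p X) = Dstar k (s-1) p and
   Dstar k s (p (X - 1)) = - k Dstar (k-1) (s-1) p, which give closed values
   on the products X^a (X - 1)^b.
   1. Property (R) says A_n = (-1)^n A_n(1 - X); the functional vanishes on
      (1 - X)^nu for nu > k and equals (2k - nu)^(k) = k! C(2k-nu,k) otherwise,
      which yields the explicit formula for a_{n,k}.
   2. The recurrence follows termwise from a recurrence of these weights in k,
      after re-indexing with C(n,nu) nu (nu-1) = n (n-1) C(n-2,nu-2).
   3. For odd n, A_n(X + 1/2) is odd, hence of the form X O(X^2), and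
      (X - 1/2)^2 = X(X - 1) + 1/4 gives A_n = (2X - 1) F(X(X - 1)).  Since
      Dstar k (2k) ((2X - 1)(X(X - 1))^i) = [i = k] (-1)^k k!, the coefficients
      of any such F are read off by the functional. *)

Definition ffz (x : int) (k : nat) : int := \prod_(i < k) (x - i%:Z).

Lemma ffz0 (x : int) : ffz x 0 = 1.
Proof. by rewrite /ffz big_ord0. Qed.

Lemma ffzS (x : int) (k : nat) : ffz x k.+1 = ffz x k * (x - k%:Z).
Proof. by rewrite /ffz big_ord_recr. Qed.

Lemma ffzSl (x : int) (k : nat) : ffz x k.+1 = x * ffz (x - 1) k.
Proof.
rewrite /ffz big_ord_recl subr0; congr (_ * _); apply: eq_bigr => i _.
by rewrite lift0 -addn1 PoszD opprD addrA addrAC.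
Qed.

Lemma ffz_diff (x : int) (k : nat) :
  ffz x k.+1 - ffz (x - 1) k.+1 = k.+1%:Z * ffz (x - 1) k.
Proof. by rewrite ffzSl ffzS; ring. Qed.

Lemma ffz_nat (a k : nat) : ffz a%:Z k = (a ^_ k)%N%:Z.
Proof.
elim: k => [|k IH]; first by rewrite ffz0.
rewrite ffzS IH ffactnSr PoszM.
by case: (leqP k a) => h; [rewrite subzn | rewrite ffact_small // !mul0r].
Qed.

Lemma iter_lderiv (F : fieldType) (k : nat) (p : laurent F) :
  iter k (@lderiv F) p = [seq (m.1 *~ ffz m.2 k, m.2 - k%:Z) | m <- p].
Proof.
elim: k => [|k IH] /=.
  by rewrite -[LHS]map_id; apply: eq_map => -[c e] /=; rewrite ffz0 mulr1z subr0.
rewrite IH /lderiv -map_comp; apply: eq_map => -[c e] /=.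
by rewrite ffzS mulrzA -addn1 PoszD opprD addrA.
Qed.

Lemma lderivn_at1E (F : fieldType) (k : nat) (p : laurent F) :
  lderivn_at1 k p = \sum_(m <- p) m.1 *~ ffz m.2 k.
Proof.
rewrite /lderivn_at1 iter_lderiv /leval big_map; apply: eq_bigr => m _ /=.
by rewrite exp1rz mulr1.
Qed.

Section Dstar.
Variable F : comNzRingType.
Implicit Types (p q : {poly F}) (k : nat) (s : int).

(* Dstar k s p is the k-th derivative at x = 1 of x^s p(1/x). *)
Definition Dstar k s p : F := \sum_(j < size p) p`_j * (ffz (s - j%:Z) k)%:~R.

Lemma DstarE k s p (N : nat) : (size p <= N)%N ->
  Dstar k s p = \sum_(j < N) p`_j * (ffz (s - j%:Z) k)%:~R.
Proof.
move=> h; rewrite /Dstar (big_ord_widen N (fun j => p`_j * (ffz (s - j%:Z) k)%:~R) h).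
rewrite big_mkcond; apply: eq_bigr => j _; case: ifP => // /negbT.
by rewrite -leqNgt => hj; rewrite nth_default // mul0r.
Qed.

Lemma DstarD k s p q : Dstar k s (p + q) = Dstar k s p + Dstar k s q.
Proof.
set N := maxn (size p) (size q).
rewrite !(@DstarE _ _ _ N) ?leq_maxl ?leq_maxr ?(leq_trans (size_polyD _ _)) //.
by rewrite -big_split; apply: eq_bigr => j _; rewrite coefD mulrDl.
Qed.

Lemma DstarZ k s (c : F) p : Dstar k s (c *: p) = c * Dstar k s p.
Proof.
rewrite (@DstarE _ _ _ (size p)) ?size_scale_leq // /Dstar mulr_sumr.
by apply: eq_bigr => j _; rewrite coefZ mulrA.
Qed.

Lemma DstarB k s p q : Dstar k s (p - q) = Dstar k s p - Dstar k s q.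
Proof. by rewrite DstarD -scaleN1r DstarZ mulN1r. Qed.

Lemma Dstar0 k s : Dstar k s 0 = 0.
Proof. by rewrite /Dstar size_poly0 big_ord0. Qed.

Lemma Dstar_sum k s (I : finType) (P : pred I) (G : I -> {poly F}) :
  Dstar k s (\sum_(i | P i) G i) = \sum_(i | P i) Dstar k s (G i).
Proof. exact: (big_morph _ (@DstarD k s) (@Dstar0 k s)). Qed.

(* Multiplying p by X divides x^s p(1/x) by x. *)
Lemma DstarMX k s p : Dstar k s (p * 'X) = Dstar k (s - 1) p.
Proof.
have h : (size (p * 'X)%R <= (size p).+1)%N.
  by rewrite (leq_trans (size_polyMleq _ _)) // size_polyX addn2.
rewrite (DstarE _ _ h) big_ord_recl coefMX eqxx mul0r add0r /Dstar.
apply: eq_bigr => i _; rewrite coefMX lift0 /=.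
by rewrite -addn1 PoszD opprD addrA addrAC.
Qed.

(* Multiplying p by X - 1 multiplies x^s p(1/x) by (1 - x)/x; at x = 1 only
   the term differentiating the factor 1 - x survives. *)
Lemma DstarM_Xsub1 k s p :
  Dstar k s (p * ('X - 1)) = - k%:R * Dstar k.-1 (s - 1) p.
Proof.
rewrite mulrBr mulr1 DstarB DstarMX.
case: k => [|k].
  rewrite mulr0n oppr0 mul0r -[RHS](subrr (Dstar 0 s p)); congr (_ - _).
  by apply: eq_bigr => j _; rewrite !ffz0.
rewrite /Dstar -sumrB mulr_sumr; apply: eq_bigr => j _ /=.
have shift : s - 1 - j%:Z = s - j%:Z - 1 by ring.
have E : ffz (s - 1 - j%:Z) k.+1 =
         ffz (s - j%:Z) k.+1 - k.+1%:Z * ffz (s - 1 - j%:Z) k.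
  by rewrite shift -ffz_diff; ring.
by rewrite E intrB intrM; ring.
Qed.

Lemma Dstar_Xn k s (a : nat) : Dstar k s 'X^a = (ffz (s - a%:Z) k)%:~R.
Proof.
elim: a s => [|a IH] s.
  by rewrite expr0 /Dstar size_poly1 big_ord1 coef1 mul1r subr0.
rewrite exprSr DstarMX IH; congr ((ffz _ k)%:~R).
by rewrite -addn1 PoszD opprD addrA addrAC.
Qed.

Lemma Dstar_XnXsub1n k s (a b : nat) : Dstar k s ('X^a * ('X - 1) ^+ b) =
  (-1) ^+ b * (k ^_ b)%:R * (ffz (s - a%:Z - b%:Z) (k - b))%:~R.
Proof.
elim: b k s => [|b IH] k s.
  by rewrite !expr0 mulr1 Dstar_Xn ffactn0 !mul1r subn0 subr0.
rewrite exprSr mulrA DstarM_Xsub1 IH.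
case: k => [|k]; first by rewrite mulr0n oppr0 !mul0r mulr0 mul0r.
rewrite ffactSS subSS /=.
have -> : s - 1 - a%:Z - b%:Z = s - a%:Z - b.+1%:Z by rewrite -addn1 PoszD; ring.
by rewrite natrM exprS; ring.
Qed.

Lemma Dstar_basis k (i : nat) :
  Dstar k (2 * k)%N%:Z (('X *+ 2 - 1) * ('X * ('X - 1)) ^+ i) =
  if i == k then (-1) ^+ k * (k`!)%:R else 0.
Proof.
have split : ('X *+ 2 - 1) * ('X * ('X - 1)) ^+ i =
             'X^(i.+1) * ('X - 1) ^+ i + 'X^i * ('X - 1) ^+ i.+1 :> {poly F}.
  by rewrite exprMn !exprS; ring.
rewrite split DstarD !Dstar_XnXsub1n.
case: (ltngtP i k) => h.
- have ek : (k - i = (k - i.+1).+1)%N by lia.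
  have ex : (2 * k)%N%:Z - i.+1%:Z - i%:Z = (2 * k)%N%:Z - i%:Z - i.+1%:Z by ring.
  have ed : (2 * k)%N%:Z - i%:Z - i.+1%:Z - (k - i.+1)%N%:Z = (k - i.+1).+1%N%:Z.
    by lia.
  rewrite ek ex ffzS ed ffactnSr ek intrM !natrM exprS; ring.
- by rewrite !ffact_small ?(mulr0n, mulr0, mul0r, addr0) //; lia.
- subst i; rewrite subnn ffz0 ffactnn (ffact_small (ltnSn k)).
  by rewrite mulr0 mul0r addr0 mulr1.
Qed.

Lemma Dstar_comp_coef k (G : {poly F}) :
  Dstar k (2 * k)%N%:Z (('X *+ 2 - 1) * (G \Po ('X * ('X - 1)))) =
  (-1) ^+ k * (k`!)%:R * G`_k.
Proof.
rewrite comp_polyE mulr_sumr Dstar_sum.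
under eq_bigr => i _ do rewrite -scalerAr DstarZ Dstar_basis.
rewrite [RHS]mulrC; case: (ltnP k (size G)) => hk.
  rewrite (bigD1 (Ordinal hk)) //= eqxx big1 ?addr0 // => j hj.
  by rewrite ifN ?mulr0 //; apply: contra hj => /eqP e; apply/eqP/val_inj.
rewrite nth_default // mul0r big1 // => j _.
by rewrite ifN ?mulr0 // neq_ltn (leq_trans (ltn_ord j) hk).
Qed.

End Dstar.

Lemma poly_eval_inj (D : numDomainType) (p q : {poly D}) :
  (forall x, p.[x] = q.[x]) -> p = q.
Proof.
move=> h; apply/eqP; rewrite -subr_eq0; apply/eqP.
apply: (@roots_geq_poly_eq0 _ _ [seq i%:R | i <- iota 0 (size (p - q))]).
- by apply/allP => x _; rewrite /root hornerD hornerN h subrr.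
- by rewrite map_inj_uniq ?iota_uniq // => a b /eqP; rewrite eqr_nat => /eqP.
- by rewrite size_map size_iota.
Qed.

Lemma compXn (F : comNzRingType) (p : {poly F}) (m : nat) : 'X^m \Po p = p ^+ m.
Proof.
elim: m => [|m IH]; first by rewrite !expr0 -polyC1 comp_polyC.
by rewrite !exprS comp_polyM comp_polyX IH.
Qed.

Lemma comp_even_odd_N (F : comNzRingType) (e o : {poly F}) :
  ((e \Po 'X^2) + (o \Po 'X^2) * 'X) \Po (- 'X) = (e \Po 'X^2) - (o \Po 'X^2) * 'X.
Proof.
rewrite comp_polyD comp_polyM comp_polyX -!comp_polyA compXn sqrrN.
by rewrite -compXn mulrN.
Qed.

Lemma odd_fun_polyE (F : fieldType) (p : {poly F}) : (2%:R : F) != 0 ->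
  p \Po (- 'X) = - p -> p = (odd_poly p \Po 'X^2) * 'X.
Proof.
move=> two_neq0 hodd; have hflip := comp_even_odd_N (even_poly p) (odd_poly p).
rewrite poly_even_odd {}hodd in hflip.
set E := even_poly p \Po 'X^2 in hflip *; set O := odd_poly p \Po 'X^2 in hflip *.
have hEO : E + O * 'X = p by apply: poly_even_odd.
have twiceE : (2%:R : F) *: E = 0.
  rewrite scaler_nat mulr2n; transitivity ((E - O * 'X) - (- (E + O * 'X))); first by ring.
  by rewrite -hflip hEO subrr.
have E0 : E = 0 by move/eqP: twiceE; rewrite scaler_eq0 (negPf two_neq0) => /eqP.
by rewrite -[in LHS]hEO E0 add0r.
Qed.

(* Shifting X O(X^2) by 1/2 produces the factor 2X - 1 and a polynomial in
   X(X - 1), because (X - 1/2)^2 = X(X - 1) + 1/4. *)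
Lemma odd_poly_shift_half (F : fieldType) (O : {poly F}) : (2%:R : F) != 0 ->
  let h := (2%:R : F)^-1 in
  ((O \Po 'X^2) * 'X) \Po ('X - h%:P) =
    ('X *+ 2 - 1) * ((h *: (O \Po ('X + (h ^+ 2)%:P))) \Po ('X * ('X - 1))).
Proof.
move=> two_neq0 h.
have twice_h : h%:P *+ 2 = 1 :> {poly F}.
  by rewrite -rmorphMn -mulr_natr mulVf // polyC1.
have sq : ('X - h%:P) ^+ 2 = ('X + (h ^+ 2)%:P) \Po ('X * ('X - 1)) :> {poly F}.
  rewrite comp_polyD comp_polyX comp_polyC rmorphXn.
  transitivity ('X * ('X - 1) + h%:P ^+ 2 + 'X * (1 - h%:P *+ 2)); first by ring.
  by rewrite twice_h subrr mulr0 addr0.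
have lin : 'X - h%:P = ('X *+ 2 - 1) * h%:P :> {poly F}.
  by transitivity ('X * (h%:P *+ 2) - h%:P); [rewrite twice_h mulr1 | ring].
rewrite comp_polyM comp_polyX -comp_polyA compXn sq comp_polyA comp_polyZ.
by rewrite -mul_polyC lin; ring.
Qed.

(* The weight Dstar k (2k) ((1 - X)^nu): (2k - nu)^(k) = k! C(2k - nu, k) for
   nu <= k, and 0 otherwise. *)
Definition wgt (k nu : nat) : nat := if (nu <= k)%N then ((2 * k - nu) ^_ k)%N else 0%N.

Lemma ffactD (n m p : nat) : (n ^_ (m + p) = n ^_ m * (n - m) ^_ p)%N.
Proof.
elim: p => [|p IH]; first by rewrite addn0 ffactn0 muln1.
by rewrite addnS !ffactnSr IH subnDA mulnA.
Qed.

Lemma Dstar_1subXn (F : comNzRingType) (k nu : nat) :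
  Dstar k (2 * k)%N%:Z ((1 - 'X) ^+ nu : {poly F}) = (wgt k nu)%:R.
Proof.
have -> : (1 - 'X) ^+ nu = (-1) ^+ nu *: ('X^0 * ('X - 1) ^+ nu) :> {poly F}.
  by rewrite expr0 mul1r -opprB -scaleN1r exprZn.
rewrite DstarZ Dstar_XnXsub1n !mulrA -exprD addnn -mul2n exprM sqrrN !expr1n mul1r.
rewrite /wgt; case: leqP => h; last by rewrite ffact_small // mul0r.
have h2 : (nu <= 2 * k)%N by lia.
rewrite subr0 subzn // ffz_nat -natrM; congr (_%:R).
have e : (2 * k - nu - (k - nu) = k)%N by lia.
by rewrite mulnC -{3}e -ffactD subnK.
Qed.

(* The falling-factorial identity behind the recurrence, written in terms of
   j = k + 2 - nu. *)
Lemma ffact_rec (k j : nat) : (j <= k.+2)%N ->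
  ((k + j).+2 ^_ k.+2 = (4 * k + 6) * (k + j) ^_ k.+1
     + (k.+2 - j) * (k.+1 - j) * (k + j) ^_ k)%N.
Proof.
move=> hj; rewrite !ffactSS ffactnSr addKn.
have e : ((k + j).+2 * (k + j).+1 = (4 * k + 6) * j + (k.+2 - j) * (k.+1 - j))%N.
  by nia.
by rewrite mulnA e; nia.
Qed.

Lemma wgt_rec (k nu : nat) :
  (wgt k.+2 nu = (4 * k + 6) * wgt k.+1 nu + nu * (nu - 1) * wgt k (nu - 2))%N.
Proof.
rewrite /wgt; case: (leqP nu k.+2) => h2; last first.
  have -> : (nu <= k.+1)%N = false by lia.
  have -> : (nu - 2 <= k)%N = false by lia.
  by rewrite !muln0.
have -> : (nu - 2 <= k)%N = true by lia.
set j := (k.+2 - nu)%N.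
have e2 : (2 * k.+2 - nu = (k + j).+2)%N by lia.
have e1 : ((if (nu <= k.+1)%N then (2 * k.+1 - nu) ^_ k.+1 else 0) = (k + j) ^_ k.+1)%N.
  case: ifP => h; first by have -> : (2 * k.+1 - nu = k + j)%N by lia.
  have -> : j = 0%N by lia.
  by rewrite addn0 ffact_small.
have e0 : (nu * (nu - 1) * (2 * k - (nu - 2)) ^_ k =
           (k.+2 - j) * (k.+1 - j) * (k + j) ^_ k)%N.
  case: (leqP 2 nu) => h.
    have -> : (2 * k - (nu - 2) = k + j)%N by lia.
    have -> : (k.+2 - j = nu)%N by lia.
    by have -> : (k.+1 - j = nu - 1)%N by lia.
  have -> : (nu * (nu - 1) = 0)%N by nia.
  by have -> : ((k.+2 - j) * (k.+1 - j) = 0)%N by nia.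
by rewrite e2 e1 e0; apply: ffact_rec; lia.
Qed.

Lemma bin_shift2 (m i : nat) :
  ('C(m.+2, i.+2) * (i.+2 * i.+1) = m.+2 * m.+1 * 'C(m, i))%N.
Proof.
have h1 := mul_bin_diag m.+2 i.+1; have h2 := mul_bin_diag m.+1 i.
simpl in h1, h2; nia.
Qed.

Section Appell.
Variable R : realType.
Local Notation C := R[i].
Variable alpha : nat -> C.

Definition acf (n nu : nat) : C := ('C(n, nu))%:R * alpha (n - nu).

Lemma appellE (n : nat) : appell alpha n = \poly_(nu < n.+1) acf n nu.
Proof. by rewrite poly_def. Qed.

Lemma acoef_Dstar (n k : nat) : acoef alpha n k = Dstar k (2 * k)%N%:Z (appell alpha n).
Proof.
rewrite /acoef lderivn_at1E /Astar big_map /= appellE (DstarE _ _ (size_poly _ _)).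
rewrite -[0%N :: iota 1 n]/(index_iota 0 n.+1) big_mkord; apply: eq_bigr => j _ /=.
by rewrite coef_poly ltn_ord mulrzr.
Qed.

Lemma sign_sqr (k : nat) : (-1) ^+ k * (-1) ^+ k = 1 :> C.
Proof. by rewrite -exprD addnn -mul2n exprM sqrrN !expr1n. Qed.

Hypothesis hR : propR alpha.

Lemma appell_reflect (n : nat) :
  appell alpha n = (-1) ^+ n *: (appell alpha n \Po (1 - 'X)).
Proof.
apply: poly_eval_inj => x.
by rewrite hornerZ horner_comp !hornerE hR mulrA sign_sqr mul1r.
Qed.

Lemma acoef_wgt (n k : nat) :
  acoef alpha n k = (-1) ^+ n * \sum_(nu < n.+1) acf n nu * (wgt k nu)%:R.
Proof.
rewrite acoef_Dstar appell_reflect DstarZ; congr (_ * _).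
rewrite /appell (big_morph (fun p => p \Po (1 - 'X)) (fun p q => comp_polyD p q _)
  (comp_poly0 _)) Dstar_sum; apply: eq_bigr => nu _.
by rewrite comp_polyZ compXn DstarZ Dstar_1subXn.
Qed.

Lemma acoef_formula (n k : nat) : (k <= n)%N ->
  acoef alpha n k =
    (-1) ^+ n * (k`!)%:R *
      \sum_(nu < k.+1) ('C(2 * k - nu, k) * 'C(n, nu))%:R * alpha (n - nu)%N.
Proof.
move=> hk; rewrite acoef_wgt -mulrA; congr (_ * _).
rewrite mulr_sumr (big_ord_widen n.+1 (fun nu => (k`!)%:R *
  (('C(2 * k - nu, k) * 'C(n, nu))%:R * alpha (n - nu)%N)) (hk : (k.+1 <= n.+1)%N)).
rewrite [RHS]big_mkcond; apply: eq_bigr => nu _ /=.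
rewrite /wgt /acf ltnS; case: leqP => h; last by rewrite mulr0.
by rewrite -bin_ffact !natrM; ring.
Qed.

Lemma acf_shift_sum (m k : nat) :
  (m.+2 * m.+1)%N%:R * \sum_(nu < m.+1) acf m nu * (wgt k nu)%:R =
  \sum_(nu < m.+3) acf m.+2 nu * (nu * (nu - 1) * wgt k (nu - 2))%N%:R.
Proof.
rewrite [RHS]big_ord_recl big_ord_recl /= mulr0 !add0r mulr_sumr.
rewrite /bump /= add1n subnn muln0 mul0n mulr0 add0r; apply: eq_bigr => i _.
have -> : (1 + (1 + i) = i.+2)%N by lia.
rewrite /acf subSS subn2 subn1 /=.
have e := congr1 (fun x => x%:R : C) (bin_shift2 m i); rewrite /= !natrM in e.
rewrite !natrM.
transitivity ((m.+2%:R * m.+1%:R * ('C(m, i))%:R) * (alpha (m - i) * (wgt k i)%:R)).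
  by ring.
by rewrite -e; ring.
Qed.

Lemma acoef_rec (n k : nat) : (2 <= n)%N ->
  acoef alpha n k.+2 =
    (4 * k + 6)%N%:R * acoef alpha n k.+1 + (n * (n - 1))%N%:R * acoef alpha (n - 2) k.
Proof.
case: n => [|[|m]] // _; rewrite !acoef_wgt subn2 subn1 /=.
have sign : (-1) ^+ m.+2 = (-1) ^+ m :> C by rewrite !exprS !mulN1r opprK.
rewrite sign [X in _ + X]mulrCA acf_shift_sum.
have termwise : \sum_(nu < m.+3) acf m.+2 nu * (wgt k.+2 nu)%:R =
  (4 * k + 6)%N%:R * \sum_(nu < m.+3) acf m.+2 nu * (wgt k.+1 nu)%:R +
  \sum_(nu < m.+3) acf m.+2 nu * (nu * (nu - 1) * wgt k (nu - 2))%N%:R.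
  rewrite mulr_sumr -big_split; apply: eq_bigr => nu _ /=.
  by rewrite wgt_rec natrD !natrM; ring.
by rewrite termwise; ring.
Qed.

Lemma appell_shift_odd (n : nat) : odd n ->
  let h := (2%:R : C)^-1 in
  (appell alpha n \Po ('X + h%:P)) \Po (- 'X) = - (appell alpha n \Po ('X + h%:P)).
Proof.
move=> hn h; apply: poly_eval_inj => x.
rewrite -comp_polyA !horner_comp !hornerE.
have twice_h : h *+ 2 = 1 by rewrite -mulr_natr mulVf // pnatr_eq0.
have -> : - x + h = 1 - (x + h) by rewrite -twice_h mulr2n; ring.
by rewrite hR -signr_odd hn expr1 mulN1r horner_comp !hornerE.
Qed.

Lemma appell_odd_factor (n : nat) : odd n ->
  exists F : {poly C}, (size F <= (n./2).+1)%N /\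
    appell alpha n = ('X *+ 2 - 1) * (F \Po ('X * ('X - 1))).
Proof.
move=> hn; set h := (2%:R : C)^-1; set B := appell alpha n \Po ('X + h%:P).
have two_neq0 : (2%:R : C) != 0 by rewrite pnatr_eq0.
have hB : B = (odd_poly B \Po 'X^2) * 'X.
  by apply: odd_fun_polyE => //; apply: appell_shift_odd.
exists (h *: (odd_poly B \Po ('X + (h ^+ 2)%:P))); split.
  rewrite (leq_trans (size_scale_leq _ _)) // size_comp_poly2 ?size_XaddC //.
  rewrite (leq_trans (size_odd_poly _)) // size_comp_poly2 ?size_XaddC //.
  rewrite appellE (leq_trans (half_leq (size_poly _ _))) //.
  by rewrite -uphalfE uphalf_half; case: (odd n).
by rewrite -odd_poly_shift_half // -hB comp_polyXaddC_K.
Qed.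

Lemma appell_factor_coef (n : nat) (F : {poly C}) :
  appell alpha n = ('X *+ 2 - 1) * (F \Po ('X * ('X - 1))) ->
  forall k : nat, (k`!)%:R * F`_k = (-1) ^+ k * acoef alpha n k.
Proof.
move=> hA k.
by rewrite acoef_Dstar hA Dstar_comp_coef !mulrA sign_sqr mul1r.
Qed.

End Appell.

Unset Implicit Arguments.

Theorem mainTheorem16 (R : realType) (alpha : nat -> R[i]) :
  propR alpha ->
  (forall n k : nat, (k <= n)%N ->
     acoef alpha n k =
       (-1) ^+ n * (k`!)%:R *
         \sum_(nu < k.+1) ('C(2 * k - nu, k) * 'C(n, nu))%:R * alpha (n - nu)%N)
  /\ (forall n k : nat, (2 <= n)%N -> (k <= n - 2)%N ->
     acoef alpha n k.+2 =
       (4 * k + 6)%N%:R * acoef alpha n k.+1 + (n * (n - 1))%N%:R * acoef alpha (n - 2) k)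
  /\ (forall n : nat, odd n ->
       (exists F : {poly R[i]}, (size F <= (n./2).+1)%N /\
          appell alpha n = ('X *+ 2 - 1) * (F \Po ('X * ('X - 1))))
       /\ (forall F : {poly R[i]}, (size F <= (n./2).+1)%N ->
            appell alpha n = ('X *+ 2 - 1) * (F \Po ('X * ('X - 1))) ->
            forall k : nat, (k <= n./2)%N ->
              (k`!)%:R * F`_k = (-1) ^+ k * acoef alpha n k)).
Proof.
move=> hR; split; [|split].
- exact: acoef_formula.
- by move=> n k hn _; apply: acoef_rec.
- move=> n hn; split; first exact: appell_odd_factor.
  by move=> F _ hF k _; apply: appell_factor_coef.
Qed.
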